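(* Let $\Phi$ be a linear map between finite-dimensional matrix spaces, represented by coefficients $\Phi^{b,d}_{a,c}$ via $\Phi(|b\rangle\langle d|)=\sum_{a,c}\Phi^{b,d}_{a,c}|a\rangle\langle c|$ in the incoherent bases. Then $\Phi$ is completely positive iff there are matrices $K_n$ with entries $K_{n_{a,b}}$ such that $\Phi^{b,d}_{a,c}=\sum_n K_{n_{a,b}}K^*_{n_{c,d}}$ for all $a,b,c,d$. Under this condition: (1) $\Phi$ is a detection-incoherent quantum operation iff there is a conditional probability distribution $p(a|b)$ (i.e. $p(a|b)\ge0$, $\sum_a p(a|b)=1$) with $\Phi^{b,d}_{a,a}=p(a|b)\delta_{b,d}$ for all $a,b,d$; (2) $\Phi$ is a creation-incoherent quantum operation iff there is a conditional probability distribution $p(b|a)$ with $\Phi^{a,a}_{b,c}=p(b|a)\delta_{b,c}$ for all $a,b,c$, and $\sum_a\Phi^{b,d}_{a,a}=\delta_{b,d}$ for all $b,d$; (3) $\Phi$ is a detection-creation-incoherent quantum operation iff there are conditional probability distributions with $\Phi^{b,d}_{a,a}=p(a|b)\delta_{b,d}$ for all $a,b,d$ and $\Phi^{a,a}_{b,c}=p(b|a)\delta_{b,c}$ for all $a,b,c$.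
   Context: Every finite-dimensional system carries a fixed orthonormal incoherent basis $\{|i\rangle\}$; the total dephasing map is $\Delta(\rho)=\sum_i|i\rangle\langle i|\rho|i\rangle\langle i|$. A quantum operation is a completely positive trace-preserving linear map. $\Phi$ is detection-incoherent iff $\Delta\Phi=\Delta\Phi\Delta$, creation-incoherent iff $\Phi\Delta=\Delta\Phi\Delta$, and detection-creation-incoherent iff $\Delta\Phi=\Phi\Delta$. *)

From HB Require Import structures.
From mathcomp Require Import all_boot all_order all_algebra.
Set Implicit Arguments. Unset Strict Implicit. Unset Printing Implicit Defensive.
Import Order.TTheory GRing.Theory Num.Theory.
Local Open Scope ring_scope.

(* Scalars: any numeric algebraically closed field C (e.g. the complex numbers);
   0 <= z means z is real and nonnegative; Num.conj is complex conjugation.  *)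

Definition psd_fun (C : numClosedFieldType) (I : finType) (A : I -> I -> C) : Prop :=
  forall x : I -> C, 0 <= \sum_(i : I) \sum_(j : I) Num.conj (x i) * A i j * x j.

(* The ampliation id_k (x) Phi, acting on (k*m)x(k*m) matrices written with
   row/column indices in 'I_k * 'I_m, i.e. X = sum_{i,j} |i><j| (x) X_{ij}. *)
Definition ampl (C : numClosedFieldType) (m n k : nat)
  (Phi : 'M[C]_m -> 'M[C]_n) (X : ('I_k * 'I_m)%type -> ('I_k * 'I_m)%type -> C)
  : ('I_k * 'I_n)%type -> ('I_k * 'I_n)%type -> C :=
  fun ia jc => Phi (\matrix_(b, d) X (ia.1, b) (jc.1, d)) ia.2 jc.2.

Definition completely_positive (C : numClosedFieldType) (m n : nat)
  (Phi : 'M[C]_m -> 'M[C]_n) : Prop :=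
  forall (k : nat) (X : ('I_k * 'I_m)%type -> ('I_k * 'I_m)%type -> C),
    psd_fun X -> psd_fun (ampl Phi X).

Definition trace_preserving (C : numClosedFieldType) (m n : nat)
  (Phi : 'M[C]_m -> 'M[C]_n) : Prop :=
  forall A : 'M[C]_m, \tr (Phi A) = \tr A.

(* Quantum operation: completely positive trace-preserving linear map
   (linearity is part of the type {linear _ -> _} used in the statement). *)
Definition quantum_operation (C : numClosedFieldType) (m n : nat)
  (Phi : 'M[C]_m -> 'M[C]_n) : Prop :=
  completely_positive Phi /\ trace_preserving Phi.

Definition dephase (C : numClosedFieldType) (m : nat) (A : 'M[C]_m) : 'M[C]_m :=
  \matrix_(i, j) (if i == j then A i j else 0).

Definition detection_incoherent (C : numClosedFieldType) (m n : nat)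
  (Phi : 'M[C]_m -> 'M[C]_n) : Prop :=
  forall A, dephase (Phi A) = dephase (Phi (dephase A)).

Definition creation_incoherent (C : numClosedFieldType) (m n : nat)
  (Phi : 'M[C]_m -> 'M[C]_n) : Prop :=
  forall A, Phi (dephase A) = dephase (Phi (dephase A)).

Definition detection_creation_incoherent (C : numClosedFieldType) (m n : nat)
  (Phi : 'M[C]_m -> 'M[C]_n) : Prop :=
  forall A, dephase (Phi A) = Phi (dephase A).

Definition coef (C : numClosedFieldType) (m n : nat)
  (Phi : 'M[C]_m -> 'M[C]_n) (b d : 'I_m) (a c : 'I_n) : C :=
  Phi (delta_mx b d) a c.

(* p is a conditional probability distribution p(y|x) = p x y. *)
Definition cond_prob (C : numClosedFieldType) (X Y : finType) (p : X -> Y -> C) : Prop :=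
  (forall x y, 0 <= p x y) /\ (forall x, \sum_(y : Y) p x y = 1).

From HB Require Import structures.
From mathcomp Require Import all_boot all_order all_algebra.
From mathcomp Require Import ring.
Set Implicit Arguments. Unset Strict Implicit. Unset Printing Implicit Defensive.
Import Order.TTheory GRing.Theory Num.Theory.
Local Open Scope ring_scope.

(* Everything is read off the Choi matrix J((b,a),(d,c)) = Phi^{b,d}_{a,c}.
   Applying id (x) Phi to the unnormalised maximally entangled state shows that
   J is positive semidefinite when Phi is completely positive; a positive
   semidefinite matrix is a sum of rank-one terms w w^*, peeled off one at a
   time by Schur complements at nonzero diagonal entries, and the vectors w are
   the Kraus operators.  Conversely every Kraus term A |-> K A K^* acts on the
   ampliation as a congruence by id (x) K, which preserves positivity.
   Finally, detection incoherence says exactly that the diagonal of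
   Phi(|b><d|) vanishes for b <> d, creation incoherence that Phi(|a><a|) is
   diagonal, and positivity with trace preservation make the diagonal
   coefficients Phi^{b,b}_{a,a} a conditional probability distribution. *)

Section Sums.
Variable C : numClosedFieldType.

Lemma sum_delta_mulr (I : finType) (u : I) (F : I -> C) :
  \sum_i F i * (i == u)%:R = F u.
Proof.
rewrite (bigD1 u) //= eqxx mulr1 big1 ?addr0 // => i /negbTE ->.
by rewrite mulr0.
Qed.

Lemma sum_delta_mull (I : finType) (u : I) (F : I -> C) :
  \sum_i (i == u)%:R * F i = F u.
Proof. under eq_bigr do rewrite mulrC. exact: sum_delta_mulr. Qed.

Lemma sum_pair (I M : finType) (F : I * M -> C) :
  \sum_p F p = \sum_i \sum_b F (i, b).
Proof. by rewrite pair_bigA; apply: eq_bigr => -[]. Qed.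

Lemma sum_pair_delta (I M : finType) (i : I) (F : I * M -> C) :
  \sum_(p : I * M) (p.1 == i)%:R * F p = \sum_b F (i, b).
Proof.
rewrite sum_pair /=; under eq_bigr => j _ do rewrite -mulr_sumr.
exact: sum_delta_mull.
Qed.

End Sums.

Section HermitianForm.
Variables (C : numClosedFieldType) (I : finType).
Implicit Types (J : I -> I -> C) (x y : I -> C).

Definition hform J x y : C := \sum_i \sum_j (x i)^* * J i j * y j.

Definition unitv (u : I) : I -> C := fun i => (i == u)%:R.

Lemma hform_unitvl J u y : hform J (unitv u) y = \sum_j J u j * y j.
Proof.
rewrite /hform -(sum_delta_mull u (fun i => \sum_j J i j * y j)).
apply: eq_bigr => i _; rewrite mulr_sumr; apply: eq_bigr => j _.
by rewrite /unitv conjC_nat mulrA.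
Qed.

Lemma hform_unitvr J x v : hform J x (unitv v) = \sum_i (x i)^* * J i v.
Proof. by apply: eq_bigr => i _; rewrite sum_delta_mulr. Qed.

Lemma hform_unitv J u v : hform J (unitv u) (unitv v) = J u v.
Proof. by rewrite hform_unitvl sum_delta_mulr. Qed.

Lemma hform_add_unitv J x u t :
  hform J (fun i => x i + t * unitv u i) (fun i => x i + t * unitv u i) =
  hform J x x + t * hform J x (unitv u) + t^* * hform J (unitv u) x
  + t^* * t * J u u.
Proof.
rewrite -hform_unitv /hform !mulr_sumr -!big_split /=.
apply: eq_bigr => i _; rewrite !mulr_sumr -!big_split /=.
apply: eq_bigr => j _; rewrite rmorphD rmorphM /=; ring.
Qed.

End HermitianForm.

Arguments unitv {C I} u i.

Section PositiveSemidefinite.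
Variables (C : numClosedFieldType) (I : finType) (J : I -> I -> C).
Hypothesis psdJ : psd_fun J.
Let hform_ge0 x : 0 <= hform J x x := psdJ x.

Lemma psd_diag_ge0 u : 0 <= J u u.
Proof. by rewrite -hform_unitv. Qed.

Lemma psd_hermitian u v : J v u = (J u v)^*.
Proof.
(* The form at e_u + t e_v shows that t J u v + t^* J v u is real for every t;
   take t = 1 and t = 'i. *)
have real t : (t * J u v + t^* * J v u)^* = t * J u v + t^* * J v u.
  have := geC0_conj (hform_ge0 (fun i => unitv u i + t * unitv v i)).
  rewrite hform_add_unitv !hform_unitv !rmorphD !rmorphM /= conjCK.
  rewrite !(geC0_conj (psd_diag_ge0 _)) => e.
  transitivity (J u u + t^* * (J u v)^* + t * (J v u)^* + t * t^* * J v v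
                - J u u - t * t^* * J v v); first by ring.
  by rewrite e; ring.
have r1 := real 1; have ri := real 'i.
rewrite !rmorphD !rmorphM /= !conjCK conjC1 !mul1r conjCi in r1 ri.
rewrite -[J v u]conjCK; congr (_^*); apply/eqP; rewrite -subr_eq0.
have /eqP : 'i *+ 2 * ((J v u)^* - J u v) = 0.
  transitivity ('i * ((J u v)^* + (J v u)^* - (J u v + J v u))
    + (- 'i * (J u v)^* + 'i * (J v u)^* - ('i * J u v + - 'i * J v u))).
    by ring.
  by rewrite r1 ri !subrr mulr0 addr0.
by rewrite mulf_eq0 mulrn_eq0 (negbTE (neq0Ci C)).
Qed.

Lemma psd_col_eq0 u v : J u u = 0 -> J v u = 0.
Proof.
(* Otherwise the form at e_v + t e_u, where t J v u = -(J v v + 1), is < 0. *)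
move=> Juu0; apply/eqP/negPn/negP => Jvu_neq0.
pose t := - (J v v + 1) / J v u.
have tJvu : t * J v u = - (J v v + 1) by rewrite mulfVK.
have := hform_ge0 (fun i => unitv v i + t * unitv u i).
rewrite hform_add_unitv !hform_unitv Juu0 mulr0 addr0 (psd_hermitian v u).
rewrite -rmorphM tJvu rmorphN /= (geC0_conj (addr_ge0 (psd_diag_ge0 v) ler01)).
have -> : J v v - (J v v + 1) - (J v v + 1) = - (J v v + 2) by ring.
by rewrite oppr_ge0 lt_geF // ltr_wpDl ?psd_diag_ge0.
Qed.

Definition schur (u0 : I) : I -> I -> C :=
  fun u v => J u v - J u u0 * J u0 v / J u0 u0.

Lemma hform_schur u0 x :
  hform (schur u0) x x =
  hform J x x - hform J x (unitv u0) * hform J (unitv u0) x / J u0 u0.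
Proof.
rewrite hform_unitvr hform_unitvl /hform !mulr_suml -sumrB.
apply: eq_bigr => i _; rewrite mulr_sumr mulr_suml -sumrB.
by apply: eq_bigr => j _; rewrite /schur; ring.
Qed.

Lemma psd_schur u0 : psd_fun (schur u0).
Proof.
move=> x; change (0 <= hform (schur u0) x x); rewrite hform_schur.
have conj_s : hform J x (unitv u0) = (hform J (unitv u0) x)^*.
  rewrite hform_unitvr hform_unitvl rmorph_sum; apply: eq_bigr => i _.
  by rewrite rmorphM /= -psd_hermitian mulrC.
rewrite conj_s; set s := hform J (unitv u0) x.
(* If J u0 u0 = 0, the junk value x / 0 = 0 makes schur u0 equal to J. *)
have [d0|d_neq0] := eqVneq (J u0 u0) 0; first by rewrite d0 invr0 mulr0 subr0.
have := hform_ge0 (fun i => x i + (- s / J u0 u0) * unitv u0 i).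
rewrite hform_add_unitv conj_s -/s rmorphM rmorphN fmorphV /=.
rewrite (geC0_conj (psd_diag_ge0 u0)) => /le_trans; apply.
by rewrite le_eqVlt; apply/orP; left; apply/eqP; field.
Qed.

Lemma schur_diag u0 : schur u0 u0 u0 = 0.
Proof.
rewrite /schur; have [->|d_neq0] := eqVneq (J u0 u0) 0.
  by rewrite !mul0r subrr.
by rewrite mulfK ?subrr.
Qed.

Lemma schur_rank1 u0 u v :
  J u v = schur u0 u v
          + J u u0 / sqrtC (J u0 u0) * (J v u0 / sqrtC (J u0 u0))^*.
Proof.
have r_real : (sqrtC (J u0 u0))^* = sqrtC (J u0 u0).
  by rewrite geC0_conj // sqrtC_ge0 psd_diag_ge0.
rewrite rmorphM fmorphV /= r_real -psd_hermitian /schur.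
by rewrite -[in X in _ / X](sqrtCK (J u0 u0)) expr2 invfM; ring.
Qed.

End PositiveSemidefinite.

Lemma psd_gram_on (C : numClosedFieldType) (I : finType) (s : seq I)
    (J : I -> I -> C) :
  psd_fun J -> (forall u, u \notin s -> J u u = 0) ->
  exists ws : seq (I -> C), forall u v, J u v = \sum_(w <- ws) w u * (w v)^*.
Proof.
elim: s J => [|u0 s IH] J psdJ Jdiag.
  by exists [::] => u v; rewrite big_nil (psd_col_eq0 psdJ) ?Jdiag.
have [|ws ws_gram] := IH (schur J u0) (psd_schur psdJ u0).
  move=> u u_notin_s; have [->|u_neq_u0] := eqVneq u u0; first exact: schur_diag.
  have Juu0 : J u u = 0 by rewrite Jdiag // in_cons negb_or u_neq_u0.
  by rewrite /schur (psd_col_eq0 psdJ u0 Juu0) Juu0 mulr0 mul0r subrr.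
exists ((fun u => J u u0 / sqrtC (J u0 u0)) :: ws) => u v.
by rewrite big_cons (schur_rank1 psdJ u0 u v) ws_gram addrC.
Qed.

Lemma psd_gram (C : numClosedFieldType) (I : finType) (J : I -> I -> C) :
  psd_fun J ->
  exists ws : seq (I -> C), forall u v, J u v = \sum_(w <- ws) w u * (w v)^*.
Proof.
by move=> psdJ; apply: (psd_gram_on (s := enum I)) => // u; rewrite mem_enum.
Qed.

Section PsdClosure.
Variable C : numClosedFieldType.

Lemma psd_fun_ext (I : finType) (J J' : I -> I -> C) :
  (forall u v, J u v = J' u v) -> psd_fun J -> psd_fun J'.
Proof.
move=> eJ psdJ x; have := psdJ x; congr (0 <= _).
by apply: eq_bigr => i _; apply: eq_bigr => j _; rewrite eJ.
Qed.

Lemma psd_sum (T I : finType) (J : T -> I -> I -> C) :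
  (forall k, psd_fun (J k)) -> psd_fun (fun u v => \sum_k J k u v).
Proof.
move=> psdJ x; rewrite (_ : \sum_i _ = \sum_k hform (J k) x x).
  by apply: sumr_ge0 => k _; apply: psdJ.
symmetry; rewrite /hform exchange_big; apply: eq_bigr => i _.
by rewrite exchange_big; apply: eq_bigr => j _; rewrite mulr_sumr mulr_suml.
Qed.

Lemma psd_rank1 (I : finType) (w : I -> C) : psd_fun (fun u v => w u * (w v)^*).
Proof.
move=> x; set s := \sum_i (w i)^* * x i.
rewrite (_ : \sum_i _ = s^* * s); first by rewrite mulrC mul_conjC_ge0.
rewrite /s rmorph_sum mulr_suml; apply: eq_bigr => i _.
rewrite mulr_sumr; apply: eq_bigr => j _.
by rewrite rmorphM /= conjCK; ring.
Qed.

Lemma psd_pullback (I I' : finType) (L : I' -> I -> C) (J : I -> I -> C) :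
  psd_fun J -> psd_fun (fun p q => \sum_u \sum_v L p u * J u v * (L q v)^*).
Proof.
move=> psdJ x; have := psdJ (fun u => \sum_p (L p u)^* * x p); congr (0 <= _).
transitivity (\sum_u \sum_v \sum_p \sum_q (x p)^* * L p u * J u v * (L q v)^* * x q).
  apply: eq_bigr => u _; apply: eq_bigr => v _.
  rewrite rmorph_sum !mulr_suml; apply: eq_bigr => p _.
  by rewrite mulr_sumr; apply: eq_bigr => q _; rewrite rmorphM /= conjCK; ring.
transitivity (\sum_p \sum_q \sum_u \sum_v (x p)^* * L p u * J u v * (L q v)^* * x q).
  under eq_bigr do rewrite exchange_big.
  rewrite exchange_big; under eq_bigr do under eq_bigr do rewrite exchange_big.
  by under eq_bigr do rewrite exchange_big.
apply: eq_bigr => p _; apply: eq_bigr => q _.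
rewrite mulr_sumr mulr_suml; apply: eq_bigr => u _.
by rewrite mulr_sumr mulr_suml; apply: eq_bigr => v _; ring.
Qed.

End PsdClosure.

Section Dephasing.
Variables (C : numClosedFieldType) (m : nat).

Lemma dephaseK (A : 'M[C]_m) : dephase (dephase A) = dephase A.
Proof. by apply/matrixP => i j; rewrite !mxE; case: eqP. Qed.

Lemma dephase_delta (b d : 'I_m) :
  dephase (delta_mx b d : 'M[C]_m) = (b == d)%:R *: delta_mx b d.
Proof.
apply/matrixP => i j; rewrite !mxE.
case: ifP => [/eqP <-|ij].
  case: (i =P b) => [<-|_]; rewrite ?eqxx /= ?mulr0 //.
  by case: (i == d); rewrite ?mulr1 ?mul0r.
case: (i =P b) => [<-|_]; case: (j =P d) => [<-|_];
  by rewrite ?ij ?mul0r ?mulr0 ?andbF.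
Qed.

Lemma mxtrace_delta (b d : 'I_m) : \tr (delta_mx b d : 'M[C]_m) = (b == d)%:R.
Proof.
rewrite /mxtrace (bigD1 b) //= mxE eqxx big1 ?addr0 // => i /negbTE ib.
by rewrite mxE ib.
Qed.

End Dephasing.

Lemma detection_creation_incoherentE (C : numClosedFieldType) (m n : nat)
    (Phi : 'M[C]_m -> 'M[C]_n) :
  detection_creation_incoherent Phi <->
  detection_incoherent Phi /\ creation_incoherent Phi.
Proof.
split=> [dci | [di ci] A]; last by rewrite di -ci.
by split=> A; rewrite -dci dephaseK.
Qed.

Section Coefficients.
Variables (C : numClosedFieldType) (m n : nat).
Variable Phi : {linear 'M[C]_m -> 'M[C]_n}.

Lemma entry_coef A a c : Phi A a c = \sum_b \sum_d A b d * coef Phi b d a c.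
Proof.
rewrite {1}(matrix_sum_delta A) linear_sum summxE; apply: eq_bigr => b _.
by rewrite linear_sum summxE; apply: eq_bigr => d _; rewrite linearZ mxE.
Qed.

Definition choi : 'I_m * 'I_n -> 'I_m * 'I_n -> C :=
  fun p q => coef Phi p.1 q.1 p.2 q.2.

Lemma choi_psd : completely_positive Phi -> psd_fun choi.
Proof.
pose omega (p : 'I_m * 'I_m) : C := (p.1 == p.2)%:R.
move=> cpPhi; apply: psd_fun_ext (cpPhi _ _ (psd_rank1 omega)) => -[i a] [j c].
rewrite /ampl /choi /coef /=; congr (Phi _ _ _); apply/matrixP => b d.
by rewrite !mxE conjC_nat -natrM mulnb ![_ == i]eq_sym ![_ == j]eq_sym.
Qed.

Lemma cp_kraus : completely_positive Phi ->
  exists (N : nat) (K : 'I_N -> 'M[C]_(n, m)),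
    forall b d a c, coef Phi b d a c = \sum_(k < N) K k a b * (K k c d)^*.
Proof.
move=> /choi_psd/psd_gram[ws choiE].
exists (size ws), (fun k => \matrix_(a, b) tnth (in_tuple ws) k (b, a)).
move=> b d a c; rewrite [LHS](choiE (b, a) (d, c)) big_tnth.
by apply: eq_bigr => k _; rewrite !mxE.
Qed.

Lemma kraus_cp (N : nat) (K : 'I_N -> 'M[C]_(n, m)) :
  (forall b d a c, coef Phi b d a c = \sum_(k < N) K k a b * (K k c d)^*) ->
  completely_positive Phi.
Proof.
move=> coefE k X psdX.
(* L l is the matrix of id_k (x) K l. *)
pose L (l : 'I_N) (p : 'I_k * 'I_n) (u : 'I_k * 'I_m) :=
  (u.1 == p.1)%:R * K l p.2 u.2.
apply: psd_fun_ext (psd_sum (fun l => psd_pullback (L l) psdX)) => -[i a] [j c].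
have pullbackE l : \sum_u \sum_v L l (i, a) u * X u v * (L l (j, c) v)^* =
    \sum_b \sum_d K l a b * X (i, b) (j, d) * (K l c d)^*.
  transitivity (\sum_(u : 'I_k * 'I_m) (u.1 == i)%:R * \sum_(v : 'I_k * 'I_m)
                  (v.1 == j)%:R * (K l a u.2 * X u v * (K l c v.2)^*)).
    apply: eq_bigr => u _; rewrite mulr_sumr; apply: eq_bigr => v _.
    by rewrite /L rmorphM /= conjC_nat; ring.
  by rewrite sum_pair_delta; apply: eq_bigr => b _; rewrite sum_pair_delta.
rewrite /ampl entry_coef (eq_bigr _ (fun l _ => pullbackE l)) exchange_big.
apply: eq_bigr => b _; rewrite exchange_big; apply: eq_bigr => d _.
by rewrite !mxE coefE mulr_sumr; apply: eq_bigr => l _; ring.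
Qed.

Lemma mxtrace_coef A :
  \tr (Phi A) = \sum_b \sum_d A b d * \sum_a coef Phi b d a a.
Proof.
rewrite /mxtrace; under eq_bigr do rewrite entry_coef.
rewrite exchange_big; apply: eq_bigr => b _; rewrite exchange_big.
by apply: eq_bigr => d _; rewrite mulr_sumr.
Qed.

Lemma trace_preservingP :
  trace_preserving Phi <-> forall b d, \sum_a coef Phi b d a a = (b == d)%:R.
Proof.
split=> [tp b d | coefE A]; first by rewrite -mxtrace_delta -tp.
rewrite mxtrace_coef; apply: eq_bigr => b _.
by under eq_bigr do rewrite coefE eq_sym; rewrite sum_delta_mulr.
Qed.

Lemma quantum_operation_cond_prob :
  quantum_operation Phi -> cond_prob (fun b a => coef Phi b b a a).
Proof.
case=> cpPhi /trace_preservingP tp; split=> [b a | b]; last by rewrite tp eqxx.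
exact: (psd_diag_ge0 (choi_psd cpPhi) (b, a)).
Qed.

Lemma detection_incoherentP :
  detection_incoherent Phi <-> forall a b d, b != d -> coef Phi b d a a = 0.
Proof.
split=> [di a b d bd | offdiag A].
  have := congr1 (fun M : 'M[C]_n => M a a) (di (delta_mx b d)).
  by rewrite /= !mxE eqxx dephase_delta (negbTE bd) scale0r linear0 mxE.
apply/matrixP => i j; rewrite !mxE; case: eqP => // <-.
rewrite !entry_coef; apply: eq_bigr => b _; apply: eq_bigr => d _.
by rewrite mxE; have [//|bd] := eqVneq b d; rewrite offdiag // !mulr0.
Qed.

Lemma creation_incoherentP :
  creation_incoherent Phi <-> forall a b c, b != c -> coef Phi a a b c = 0.
Proof.
split=> [ci a b c bc | offdiag A].
  have := congr1 (fun M : 'M[C]_n => M b c) (ci (delta_mx a a)).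
  by rewrite dephase_delta eqxx scale1r mxE (negbTE bc).
apply/matrixP => i j; rewrite [RHS]mxE; have [->//|ij] := eqVneq i j.
rewrite entry_coef big1 // => b _; rewrite big1 // => d _.
by rewrite mxE; have [<-|_] := eqVneq b d; rewrite ?offdiag ?mulr0 ?mul0r.
Qed.

End Coefficients.

Section IncoherentOperations.
Variables (C : numClosedFieldType) (m n : nat).
Variable Phi : {linear 'M[C]_m -> 'M[C]_n}.
Hypothesis cpPhi : completely_positive Phi.

Lemma detection_incoherent_opP :
  (quantum_operation Phi /\ detection_incoherent Phi) <->
  exists p : 'I_m -> 'I_n -> C,
    cond_prob p /\ forall a b d, coef Phi b d a a = p b a * (b == d)%:R.
Proof.
split=> [[qo /detection_incoherentP offdiag] | [p [[_ p_sum] coefE]]].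
  exists (fun b a => coef Phi b b a a); split=> [|a b d].
    exact: quantum_operation_cond_prob.
  by have [<-|bd] := eqVneq b d; rewrite ?mulr1 // offdiag ?mulr0.
split; first split=> //.
  apply/trace_preservingP => b d; under eq_bigr do rewrite coefE.
  by rewrite -mulr_suml p_sum mul1r.
by apply/detection_incoherentP => a b d /negbTE bd; rewrite coefE bd mulr0.
Qed.

Lemma creation_incoherent_opP :
  (quantum_operation Phi /\ creation_incoherent Phi) <->
  exists q : 'I_m -> 'I_n -> C,
    cond_prob q /\ (forall a b c, coef Phi a a b c = q a b * (b == c)%:R) /\
    (forall b d, \sum_a coef Phi b d a a = (b == d)%:R).
Proof.
split=> [[qo /creation_incoherentP offdiag] | [q [_ [coefE /trace_preservingP tp]]]].
  exists (fun a b => coef Phi a a b b).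
  split; first exact: quantum_operation_cond_prob.
  split=> [a b c|]; last by apply/trace_preservingP; case: qo.
  by have [<-|bc] := eqVneq b c; rewrite ?mulr1 // offdiag ?mulr0.
split; first by [].
by apply/creation_incoherentP => a b c /negbTE bc; rewrite coefE bc mulr0.
Qed.

Lemma detection_creation_incoherent_opP :
  (quantum_operation Phi /\ detection_creation_incoherent Phi) <->
  exists p q : 'I_m -> 'I_n -> C,
    cond_prob p /\ cond_prob q /\
    (forall a b d, coef Phi b d a a = p b a * (b == d)%:R) /\
    (forall a b c, coef Phi a a b c = q a b * (b == c)%:R).
Proof.
split=> [[qo /detection_creation_incoherentE[di ci]] | [p [q [pP [qP [pE qE]]]]]].
  have [p [pP pE]] := detection_incoherent_opP.1 (conj qo di).
  have [q [qP [qE _]]] := creation_incoherent_opP.1 (conj qo ci).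
  by exists p, q.
have [qo di] := detection_incoherent_opP.2 (ex_intro _ p (conj pP pE)).
split=> //; apply/detection_creation_incoherentE; split=> //.
by apply/creation_incoherentP => a b c /negbTE bc; rewrite qE bc mulr0.
Qed.

End IncoherentOperations.

Theorem proposition15 (C : numClosedFieldType) (m n : nat)
    (Phi : {linear 'M[C]_m -> 'M[C]_n}) :
  (completely_positive Phi <->
     exists (N : nat) (K : 'I_N -> 'M[C]_(n, m)),
       forall (b d : 'I_m) (a c : 'I_n),
         coef Phi b d a c = \sum_(k < N) K k a b * Num.conj (K k c d))
  /\
  (completely_positive Phi ->
     (* (1) *)
     ((quantum_operation Phi /\ detection_incoherent Phi) <->
        exists p : 'I_m -> 'I_n -> C,  (* p b a = p(a|b) *)
          cond_prob p /\
          forall (a : 'I_n) (b d : 'I_m),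
            coef Phi b d a a = p b a * (b == d)%:R)
     /\
     (* (2) *)
     ((quantum_operation Phi /\ creation_incoherent Phi) <->
        exists q : 'I_m -> 'I_n -> C,  (* q a b = p(b|a) *)
          cond_prob q /\
          (forall (a : 'I_m) (b c : 'I_n),
            coef Phi a a b c = q a b * (b == c)%:R) /\
          (forall b d : 'I_m, \sum_(a < n) coef Phi b d a a = (b == d)%:R))
     /\
     (* (3) *)
     ((quantum_operation Phi /\ detection_creation_incoherent Phi) <->
        exists (p : 'I_m -> 'I_n -> C) (q : 'I_m -> 'I_n -> C),
          cond_prob p /\ cond_prob q /\
          (forall (a : 'I_n) (b d : 'I_m),
            coef Phi b d a a = p b a * (b == d)%:R) /\
          (forall (a : 'I_m) (b c : 'I_n),
            coef Phi a a b c = q a b * (b == c)%:R))).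
Proof.
split; first by split=> [/cp_kraus | [N [K /kraus_cp]]].
move=> cpPhi; split; first exact: detection_incoherent_opP.
by split; [exact: creation_incoherent_opP | exact: detection_creation_incoherent_opP].
Qed.
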